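(* For any $\mathscr{V}$-category $\mathscr{B}$: (1) if $g\cdot f\in\mathsf{StrMono}_\mathscr{V}\mathscr{B}$ then $f\in\mathsf{StrMono}_\mathscr{V}\mathscr{B}$; (2) $\mathsf{StrMono}_\mathscr{V}\mathscr{B}$ is closed under composition, cotensors, arbitrary $\mathscr{V}$-fibre-products, and $\mathscr{V}$-pullbacks along arbitrary morphisms in $\mathscr{B}$.
   Context: $\mathscr{V}$ is a closed symmetric monoidal category (no limits assumed). A morphism $m:B_1\to B_2$ of $\mathscr{B}$ is a $\mathscr{V}$-mono if $\mathscr{B}(A,m)$ is a monomorphism in $\mathscr{V}$ for all objects $A$; a $\mathscr{V}$-epi is a $\mathscr{V}$-mono in $\mathscr{B}^{op}$. A $\mathscr{V}$-limit of an ordinary diagram is a cone sent by each $\mathscr{B}(A,-):\mathscr{B}\to\mathscr{V}$ to a limit cone ($\mathscr{V}$-pullbacks and $\mathscr{V}$-fibre-products, i.e. wide pullbacks of class-indexed families with common codomain, are special cases). For $e:A_1\to A_2$, $m:B_1\to B_2$, $e\downarrow_\mathscr{V} m$ means the square formed by $\mathscr{B}(A_2,m)$, $\mathscr{B}(A_1,m)$, $\mathscr{B}(e,B_1)$, $\mathscr{B}(e,B_2)$ is a pullback in $\mathscr{V}$. A $\mathscr{V}$-strong-mono is a $\mathscr{V}$-mono $m$ with $e\downarrow_\mathscr{V} m$ for every $\mathscr{V}$-epi $e$; $\mathsf{StrMono}_\mathscr{V}\mathscr{B}$ is the class of these. Closure under cotensors means: for $m:B_1\to B_2$ in the class and $V\in\mathscr{V}$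 with cotensors $[V,B_1],[V,B_2]$ existing, $[V,m]$ is in the class. *)

Set Implicit Arguments.
Set Universe Polymorphism.

(** * Ordinary categories (Leibniz equality on morphisms). *)
Record Cat := {
  ob :> Type;
  hom : ob -> ob -> Type;
  idm : forall {a : ob}, hom a a;
  comp : forall {a b c : ob}, hom b c -> hom a b -> hom a c;
  comp_idl : forall a b (f : hom a b), comp idm f = f;
  comp_idr : forall a b (f : hom a b), comp f idm = f;
  comp_assoc : forall a b c d (f : hom a b) (g : hom b c) (h : hom c d),
      comp h (comp g f) = comp (comp h g) f
}.
Arguments hom {_} _ _.
Arguments idm {_ a}.
Arguments comp {_ a b c} _ _.

Notation "g \oo f" := (comp g f) (at level 40, left associativity).

Record CSMCat := {
  vcat :> Cat;
  tens : vcat -> vcat -> vcat;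
  tensm : forall {a b c d : vcat}, hom a b -> hom c d -> hom (tens a c) (tens b d);
  tensm_id : forall a c, tensm (@idm _ a) (@idm _ c) = idm;
  tensm_comp : forall a b c a' b' c' (f : hom a b) (f' : hom b c)
      (g : hom a' b') (g' : hom b' c'),
      tensm (f' \oo f) (g' \oo g) = tensm f' g' \oo tensm f g;
  unit : vcat;
  assoc : forall a b c, hom (tens (tens a b) c) (tens a (tens b c));
  assoc_inv : forall a b c, hom (tens a (tens b c)) (tens (tens a b) c);
  assoc_invK : forall a b c, assoc_inv a b c \oo assoc a b c = idm;
  assocK : forall a b c, assoc a b c \oo assoc_inv a b c = idm;
  assoc_nat : forall a b c a' b' c' (f : hom a a') (g : hom b b') (h : hom c c'),
      assoc a' b' c' \oo tensm (tensm f g) h = tensm f (tensm g h) \oo assoc a b c;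
  lunit : forall a, hom (tens unit a) a;
  lunit_inv : forall a, hom a (tens unit a);
  lunit_invK : forall a, lunit_inv a \oo lunit a = idm;
  lunitK : forall a, lunit a \oo lunit_inv a = idm;
  lunit_nat : forall a b (f : hom a b), f \oo lunit a = lunit b \oo tensm (@idm _ unit) f;
  runit : forall a, hom (tens a unit) a;
  runit_inv : forall a, hom a (tens a unit);
  runit_invK : forall a, runit_inv a \oo runit a = idm;
  runitK : forall a, runit a \oo runit_inv a = idm;
  runit_nat : forall a b (f : hom a b), f \oo runit a = runit b \oo tensm f (@idm _ unit);
  pentagon : forall a b c d,
      assoc a b (tens c d) \oo assoc (tens a b) c d
      = tensm (@idm _ a) (assoc b c d) \oo assoc a (tens b c) d \oo tensm (assoc a b c) (@idm _ d);
  triangle : forall a b,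
      tensm (@idm _ a) (lunit b) \oo assoc a unit b = tensm (runit a) (@idm _ b);
  sym : forall a b, hom (tens a b) (tens b a);
  sym_invol : forall a b, sym b a \oo sym a b = idm;
  sym_nat : forall a b a' b' (f : hom a a') (g : hom b b'),
      sym a' b' \oo tensm f g = tensm g f \oo sym a b;
  hexagon : forall a b c,
      assoc b c a \oo sym a (tens b c) \oo assoc a b c
      = tensm (@idm _ b) (sym a c) \oo assoc b a c \oo tensm (sym a b) (@idm _ c);
  ihom : vcat -> vcat -> vcat;
  ev : forall a b, hom (tens (ihom a b) a) b;
  curry : forall {z a b : vcat}, hom (tens z a) b -> hom z (ihom a b);
  ev_curry : forall z a b (f : hom (tens z a) b), ev a b \oo tensm (curry f) (@idm _ a) = f;
  curry_uniq : forall z a b (f : hom (tens z a) b) (g : hom z (ihom a b)),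
      ev a b \oo tensm g (@idm _ a) = f -> g = curry f
}.
Arguments tens {_} _ _.
Arguments tensm {_ a b c d} _ _.
Arguments unit {_}.
Arguments assoc {_} a b c.
Arguments lunit {_} a.
Arguments lunit_inv {_} a.
Arguments runit {_} a.
Arguments runit_inv {_} a.
Arguments sym {_} a b.
Arguments ihom {_} _ _.
Arguments ev {_} a b.
Arguments curry {_ z a b} _.

(** * V-categories (Kelly's conventions: M : B(b,c) (x) B(a,b) -> B(a,c)). *)
Record VCat (V : CSMCat) := {
  vob :> Type;
  vhom : vob -> vob -> V;
  vcomp : forall a b c : vob, hom (tens (vhom b c) (vhom a b)) (vhom a c);
  vid : forall a : vob, hom unit (vhom a a);
  vcomp_assoc : forall a b c d,
      vcomp a b d \oo tensm (vcomp b c d) idm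
      = vcomp a c d \oo tensm idm (vcomp a b c) \oo assoc (vhom c d) (vhom b c) (vhom a b);
  vcomp_idl : forall a b, vcomp a b b \oo tensm (vid b) idm = lunit (vhom a b);
  vcomp_idr : forall a b, vcomp a a b \oo tensm idm (vid a) = runit (vhom a b)
}.
Arguments vhom {V} _ _ _.
Arguments vcomp {V} _ _ _ _.
Arguments vid {V} _ _.

Section VCatDefs.
Context {V : CSMCat} (B : VCat V).

(** Morphisms of the underlying ordinary category B_0. *)
Definition umor (a b : B) : Type := hom (@unit V) (vhom B a b).

Definition ucomp {a b c : B} (g : umor b c) (f : umor a b) : umor a c :=
  vcomp B a b c \oo tensm g f \oo lunit_inv unit.

(** The hom functors B(a,-) and B(-,b) on morphisms of B_0. *)
Definition homL (a : B) {b1 b2 : B} (m : umor b1 b2) : hom (vhom B a b1) (vhom B a b2) :=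
  vcomp B a b1 b2 \oo tensm m idm \oo lunit_inv (vhom B a b1).
Definition homR {a1 a2 : B} (e : umor a1 a2) (b : B) : hom (vhom B a2 b) (vhom B a1 b) :=
  vcomp B a1 a2 b \oo tensm idm e \oo runit_inv (vhom B a2 b).

End VCatDefs.

Section VDefs.
Context {V : CSMCat}.

Definition is_mono {x y : V} (m : hom x y) : Prop :=
  forall (z : V) (u v : hom z x), m \oo u = m \oo v -> u = v.

Definition is_iso {x y : V} (f : hom x y) : Prop :=
  exists g : hom y x, g \oo f = idm /\ f \oo g = idm.

Definition is_pullback {P X Y Z : V} (p1 : hom P X) (p2 : hom P Y)
    (f : hom X Z) (g : hom Y Z) : Prop :=
  f \oo p1 = g \oo p2 /\
  forall (Q : V) (q1 : hom Q X) (q2 : hom Q Y), f \oo q1 = g \oo q2 ->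
    exists u : hom Q P, (p1 \oo u = q1 /\ p2 \oo u = q2) /\
      forall u' : hom Q P, p1 \oo u' = q1 -> p2 \oo u' = q2 -> u' = u.

Definition is_wide_pullback {I : Type} {X : I -> V} {P Z : V}
    (p : forall i, hom P (X i)) (d : hom P Z) (f : forall i, hom (X i) Z) : Prop :=
  (forall i, f i \oo p i = d) /\
  forall (Q : V) (q : forall i, hom Q (X i)) (qd : hom Q Z),
    (forall i, f i \oo q i = qd) ->
    exists u : hom Q P, ((forall i, p i \oo u = q i) /\ d \oo u = qd) /\
      forall u' : hom Q P, (forall i, p i \oo u' = q i) -> d \oo u' = qd -> u' = u.

End VDefs.

Section StrMono.
Context {V : CSMCat} (B : VCat V).

Definition Vmono {b1 b2 : B} (m : umor B b1 b2) : Prop :=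
  forall a : B, is_mono (homL B a m).

Definition Vepi {a1 a2 : B} (e : umor B a1 a2) : Prop :=
  forall b : B, is_mono (homR B e b).

Definition Vorth {a1 a2 b1 b2 : B} (e : umor B a1 a2) (m : umor B b1 b2) : Prop :=
  is_pullback (homL B a2 m) (homR B e b1) (homR B e b2) (homL B a1 m).

Definition StrMonoV {b1 b2 : B} (m : umor B b1 b2) : Prop :=
  Vmono m /\ forall (a1 a2 : B) (e : umor B a1 a2), Vepi e -> Vorth e m.

Definition is_Vpullback {b1 b2 c P : B} (m : umor B b1 b2) (f : umor B c b2)
    (f' : umor B P b1) (m' : umor B P c) : Prop :=
  ucomp B m f' = ucomp B f m' /\
  forall a : B, is_pullback (homL B a f') (homL B a m') (homL B a m) (homL B a f).

Definition is_Vfibre_product {I : Type} {Bi : I -> B} {b P : B}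
    (m : forall i, umor B (Bi i) b) (p : forall i, umor B P (Bi i)) (d : umor B P b) : Prop :=
  (forall i, ucomp B (m i) (p i) = d) /\
  forall a : B, is_wide_pullback (fun i => homL B a (p i)) (homL B a d) (fun i => homL B a (m i)).

Definition cotensor_cmp (X : V) {b c : B} (mu : hom X (vhom B c b)) (a : B)
    : hom (vhom B a c) (ihom X (vhom B a b)) :=
  curry (vcomp B a c b \oo tensm mu idm \oo sym (vhom B a c) X).

Definition is_cotensor (X : V) (b c : B) (mu : hom X (vhom B c b)) : Prop :=
  forall a : B, is_iso (cotensor_cmp X mu a).

End StrMono.

(* The V-orthogonality square of e : a1 -> a2 against m : b1 -> b2 is the square
   of hom-objects formed by B(a2,m), B(a1,m), B(e,b1) and B(e,b2), so each claim is
   a stability property of monos and pullbacks in V: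
   - composition and cancellation are the pasting lemmas for pullback squares;
     cancellation works because B(e,b) is mono when e is a V-epi;
   - for a V-pullback m' of m, the two-pullback lemma transfers the pullback
     property from the square of m to that of m';
   - a V-fibre-product of the m_i is a wide pullback of cartesian squares, and
     the induced square between the limits is again a pullback;
   - B(a,[X,b]) is the exponential [X, B(a,b)] in V, and [X,-] preserves monos
     and pullbacks. *)

From Corelib Require Import ssreflect.
From Stdlib Require Import ChoiceFacts IndefiniteDescription.

Set Implicit Arguments.
Set Universe Polymorphism.

Ltac reassoc := repeat rewrite comp_assoc.

Section PostComposition.
Context {C : Cat}.

Lemma postcomp2 {X Y Z : C} (a : hom Y Z) (b : hom X Y) (c : hom X Z) :
  a \oo b = c -> forall W (x : hom Z W), x \oo a \oo b = x \oo c.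
Proof. by move=> <- W x; rewrite comp_assoc. Qed.

Lemma postcomp3 {X Y Z U : C} (a : hom Z U) (b : hom Y Z) (c : hom X Y) (d : hom X U) :
  a \oo b \oo c = d -> forall W (x : hom U W), x \oo a \oo b \oo c = x \oo d.
Proof. by move=> <- W x; rewrite !comp_assoc. Qed.

End PostComposition.
Arguments postcomp2 {C X Y Z a b c} H {W} x.
Arguments postcomp3 {C X Y Z U a b c d} H {W} x.

(* Rewrites with an equation whose left-hand side is a composite of two or
   three morphisms, also where it occurs only up to associativity inside a
   left-associated composite. *)
Tactic Notation "arw" uconstr(H) :=
  first [rewrite H | rewrite (postcomp3 H) | rewrite (postcomp2 H)];
  reassoc; rewrite ?comp_idl ?comp_idr.

Section MonoidalCoherence.
Context {V : CSMCat}.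

Lemma tensm_merge {a b c a' b' c' : V} (f : hom a b) (f' : hom b c)
    (g : hom a' b') (g' : hom b' c') :
  tensm f' g' \oo tensm f g = tensm (f' \oo f) (g' \oo g).
Proof. by rewrite tensm_comp. Qed.

Lemma tensm_compl {a b c d : V} (f : hom b c) (g : hom a b) :
  tensm (f \oo g) (@idm V d) = tensm f idm \oo tensm g idm.
Proof. by rewrite tensm_merge comp_idl. Qed.

Lemma tensm_compr {a b c d : V} (f : hom b c) (g : hom a b) :
  tensm (@idm V d) (f \oo g) = tensm idm f \oo tensm idm g.
Proof. by rewrite tensm_merge comp_idl. Qed.

Lemma tensm_interchange {a b c d : V} (f : hom a b) (g : hom c d) :
  tensm f idm \oo tensm idm g = tensm idm g \oo tensm f idm.
Proof. by rewrite !tensm_merge !comp_idl !comp_idr. Qed.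

Lemma cancel_split_mono {x y z : V} {i : hom y z} {j : hom z y} {u v : hom x y} :
  j \oo i = idm -> i \oo u = i \oo v -> u = v.
Proof.
by move=> ji iuv; rewrite -(comp_idl _ _ _ u) -(comp_idl _ _ _ v) -ji -!comp_assoc iuv.
Qed.

Lemma cancel_split_epi {x y z : V} {i : hom x y} {j : hom y x} {u v : hom y z} :
  i \oo j = idm -> u \oo i = v \oo i -> u = v.
Proof.
by move=> ij uiv; rewrite -(comp_idr _ _ _ u) -(comp_idr _ _ _ v) -ij !comp_assoc uiv.
Qed.

Lemma lunit_inv_nat {a b : V} (f : hom a b) :
  lunit_inv b \oo f = tensm idm f \oo lunit_inv a.
Proof.
apply: (cancel_split_mono (lunit_invK _ b)).
by reassoc; rewrite lunitK comp_idl -lunit_nat -comp_assoc lunitK comp_idr.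
Qed.

Lemma runit_inv_nat {a b : V} (f : hom a b) :
  runit_inv b \oo f = tensm f idm \oo runit_inv a.
Proof.
apply: (cancel_split_mono (runit_invK _ b)).
by reassoc; rewrite runitK comp_idl -runit_nat -comp_assoc runitK comp_idr.
Qed.

Lemma assoc_inv_nat {a b c a' b' c' : V} (f : hom a a') (g : hom b b') (h : hom c c') :
  assoc_inv _ a' b' c' \oo tensm f (tensm g h) = tensm (tensm f g) h \oo assoc_inv _ a b c.
Proof.
apply: (cancel_split_mono (assoc_invK _ a' b' c')).
by reassoc; rewrite assocK comp_idl assoc_nat -comp_assoc assocK comp_idr.
Qed.

Lemma assoc_natl (a a' b c : V) (f : hom a a') :
  assoc a' b c \oo tensm (tensm f idm) idm = tensm f idm \oo assoc a b c.
Proof. by rewrite assoc_nat tensm_id. Qed.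

Lemma assoc_natm (a b b' c : V) (g : hom b b') :
  assoc a b' c \oo tensm (tensm idm g) idm = tensm idm (tensm g idm) \oo assoc a b c.
Proof. exact: assoc_nat. Qed.

Lemma assoc_natr (a b c c' : V) (h : hom c c') :
  assoc a b c' \oo tensm idm h = tensm idm (tensm idm h) \oo assoc a b c.
Proof. by rewrite -assoc_nat tensm_id. Qed.

Lemma assoc_inv_natl (a a' b c : V) (f : hom a a') :
  assoc_inv _ a' b c \oo tensm f idm = tensm (tensm f idm) idm \oo assoc_inv _ a b c.
Proof. by rewrite -assoc_inv_nat tensm_id. Qed.

Lemma assoc_inv_natm (a b b' c : V) (g : hom b b') :
  assoc_inv _ a b' c \oo tensm idm (tensm g idm) = tensm (tensm idm g) idm \oo assoc_inv _ a b c.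
Proof. exact: assoc_inv_nat. Qed.

Lemma tensm_idr_inj {a b : V} (f g : hom a b) :
  tensm f (@idm V unit) = tensm g idm -> f = g.
Proof.
move=> fg; rewrite -(comp_idr _ _ _ f) -(comp_idr _ _ _ g) -(runitK _ a).
by reassoc; rewrite !runit_nat fg.
Qed.

Lemma tensm_idl_inj {a b : V} (f g : hom a b) :
  tensm (@idm V unit) f = tensm idm g -> f = g.
Proof.
move=> fg; rewrite -(comp_idr _ _ _ f) -(comp_idr _ _ _ g) -(lunitK _ a).
by reassoc; rewrite !lunit_nat fg.
Qed.

(* Kelly's consequences of the pentagon and triangle axioms (1964). *)
Lemma runit_tens (A B : V) : runit (tens A B) = tensm idm (runit B) \oo assoc A B unit.
Proof.
apply: tensm_idr_inj; apply: (cancel_split_mono (assoc_invK _ A B unit)).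
rewrite -triangle; reassoc.
rewrite assoc_natr; arw (pentagon V A B unit unit).
rewrite tensm_merge comp_idl triangle -assoc_natm.
by arw (tensm_merge _ _ _ _).
Qed.

Lemma lunit_tens (A B : V) : lunit (tens A B) \oo assoc unit A B = tensm (lunit A) idm.
Proof.
apply: tensm_idl_inj.
apply: (cancel_split_epi (i := assoc unit (tens unit A) B \oo tensm (assoc unit unit A) idm)
          (j := tensm (assoc_inv _ unit unit A) idm \oo assoc_inv _ unit (tens unit A) B)).
  by reassoc; arw (tensm_merge _ _ _ _); rewrite assocK tensm_id comp_idr assocK.
rewrite -(comp_idl _ _ _ (@idm V unit)) -tensm_merge; reassoc.
arw (eq_sym (pentagon V unit unit A B)); arw triangle; rewrite -assoc_natl.
by rewrite -assoc_natm; arw (tensm_merge _ _ _ _); rewrite triangle.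
Qed.

Lemma lunit_inv_tens (A B : V) :
  assoc_inv _ unit A B \oo lunit_inv (tens A B) = tensm (lunit_inv A) idm.
Proof.
apply: (cancel_split_mono (i := lunit (tens A B) \oo assoc unit A B)
          (j := assoc_inv _ unit A B \oo lunit_inv (tens A B))).
  by reassoc; arw (lunit_invK _ _); rewrite assoc_invK.
by reassoc; arw (assocK _ _ _ _); rewrite lunitK lunit_tens tensm_merge lunitK comp_idl tensm_id.
Qed.

Lemma runit_inv_tens (A B : V) :
  assoc A B unit \oo runit_inv (tens A B) = tensm idm (runit_inv B).
Proof.
apply: (cancel_split_mono (i := tensm idm (runit B)) (j := tensm idm (runit_inv B))).
  by rewrite tensm_merge comp_idl runit_invK tensm_id.
by rewrite tensm_merge comp_idl runitK tensm_id; reassoc; rewrite -runit_tens runitK.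
Qed.

Lemma triangle_inv (A B : V) :
  assoc_inv _ A unit B \oo tensm idm (lunit_inv B) = tensm (runit_inv A) idm.
Proof.
apply: (cancel_split_mono (i := tensm (runit A) idm) (j := tensm (runit_inv A) idm)).
  by rewrite tensm_merge comp_idl runit_invK tensm_id.
rewrite tensm_merge comp_idl runitK tensm_id -triangle; reassoc.
by arw (assocK _ _ _ _); rewrite tensm_merge comp_idl lunitK tensm_id.
Qed.

End MonoidalCoherence.

Section VCategory.
Context {V : CSMCat} (B : VCat V).

Lemma vcomp_assoc_inv (a b c d : B) :
  vcomp B a c d \oo tensm idm (vcomp B a b c)
  = vcomp B a b d \oo tensm (vcomp B b c d) idm \oo assoc_inv _ _ _ _.
Proof. by rewrite vcomp_assoc; reassoc; arw (assocK _ _ _ _). Qed.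

Lemma homL_vcomp (a c b1 b2 : B) (m : umor B b1 b2) :
  homL B a m \oo vcomp B a c b1 = vcomp B a c b2 \oo tensm (homL B c m) idm.
Proof.
rewrite /homL !tensm_compl; reassoc.
arw (lunit_inv_nat _); arw (tensm_interchange _ _); arw (vcomp_assoc_inv _ _ _ _).
by arw (assoc_inv_natl _ _ _ _ _); arw (lunit_inv_tens _ _).
Qed.

Lemma vcomp_extranat (a c1 c2 b : B) (h : umor B c1 c2) :
  vcomp B a c2 b \oo tensm idm (homL B a h) = vcomp B a c1 b \oo tensm (homR B h b) idm.
Proof.
rewrite /homL /homR !tensm_compl !tensm_compr; reassoc.
by arw (vcomp_assoc_inv _ _ _ _); arw (assoc_inv_natm _ _ _ _ _); arw (triangle_inv _ _).
Qed.

Lemma homR_vcomp (a1 a2 c b : B) (e : umor B a1 a2) :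
  homR B e b \oo vcomp B a2 c b = vcomp B a1 c b \oo tensm idm (homR B e c).
Proof.
rewrite /homR !tensm_compr; reassoc.
arw (runit_inv_nat _); arw (eq_sym (tensm_interchange _ _)); arw (vcomp_assoc _ _ _ _ _).
by arw (assoc_natr _ _ _ _ _); arw (runit_inv_tens _ _).
Qed.

Lemma ucompE (b0 b1 b2 : B) (f : umor B b0 b1) (g : umor B b1 b2) :
  ucomp B g f = homL B b0 g \oo f.
Proof. by rewrite /ucomp /homL; reassoc; arw (lunit_inv_nat _); arw (tensm_merge _ _ _ _). Qed.

Lemma homL_ucomp (a b0 b1 b2 : B) (f : umor B b0 b1) (g : umor B b1 b2) :
  homL B a (ucomp B g f) = homL B a g \oo homL B a f.
Proof.
rewrite ucompE {1}/homL tensm_compl; reassoc.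
by arw (eq_sym (homL_vcomp _ _ _ _ _)).
Qed.

Lemma homR_homL (a1 a2 b1 b2 : B) (e : umor B a1 a2) (m : umor B b1 b2) :
  homR B e b2 \oo homL B a2 m = homL B a1 m \oo homR B e b1.
Proof.
rewrite {1}/homL; reassoc.
arw (homR_vcomp _ _ _ _ _); arw (eq_sym (tensm_interchange _ _)).
by arw (eq_sym (lunit_inv_nat _)).
Qed.

End VCategory.

Section Pullbacks.
Context {V : CSMCat}.

Definition jointly_mono {X Y Z : V} (a : hom X Y) (b : hom X Z) : Prop :=
  forall Q (u v : hom Q X), a \oo u = a \oo v -> b \oo u = b \oo v -> u = v.

Lemma mono_comp {x y z : V} (f : hom x y) (g : hom y z) :
  is_mono f -> is_mono g -> is_mono (g \oo f).
Proof. by move=> monof monog Q u v; rewrite -!comp_assoc => /monog /monof. Qed.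

Lemma mono_compK {x y z : V} (f : hom x y) (g : hom y z) :
  is_mono (g \oo f) -> is_mono f.
Proof. by move=> monogf Q u v fuv; apply: monogf; rewrite -!comp_assoc fuv. Qed.

Lemma jointly_monoWr {X Y Z : V} (a : hom X Y) (b : hom X Z) :
  is_mono b -> jointly_mono a b.
Proof. by move=> monob Q u v _ /monob. Qed.

Lemma pullback_jointly_mono {P X Y Z : V} (p1 : hom P X) (p2 : hom P Y)
    (f : hom X Z) (g : hom Y Z) :
  is_pullback p1 p2 f g -> jointly_mono p1 p2.
Proof.
move=> [sq univ] Q u v e1 e2.
have [w [_ wuniq]] := univ Q (p1 \oo u) (p2 \oo u) ltac:(by rewrite !comp_assoc sq).
by rewrite (wuniq u) // (wuniq v).
Qed.

Lemma pullback_transpose {P X Y Z : V} (p1 : hom P X) (p2 : hom P Y)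
    (f : hom X Z) (g : hom Y Z) :
  is_pullback p1 p2 f g -> is_pullback p2 p1 g f.
Proof.
move=> [sq univ]; split=> [|Q q1 q2 q21]; first by [].
have [u [[u1 u2] uuniq]] := univ Q q2 q1 (eq_sym q21).
by exists u; split=> [|u' e1 e2]; [|apply: uuniq].
Qed.

Lemma pullback_mono {P X Y Z : V} (p1 : hom P X) (p2 : hom P Y)
    (f : hom X Z) (g : hom Y Z) :
  is_pullback p1 p2 f g -> is_mono f -> is_mono p2.
Proof.
move=> pb monof Q u v e2.
have e1 : p1 \oo u = p1 \oo v.
  by apply: monof; rewrite !comp_assoc (proj1 pb) -!comp_assoc e2.
exact: (pullback_jointly_mono pb _ _ _ e1 e2).
Qed.

Lemma pullback_paste {A B C D E F : V} {p1 : hom A B} {q1 : hom B C} {p2 : hom A D}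
    {r : hom B E} {f : hom C F} {g1 : hom D E} {g2 : hom E F} :
  is_pullback p1 p2 r g1 -> is_pullback q1 r f g2 ->
  is_pullback (q1 \oo p1) p2 f (g2 \oo g1).
Proof.
move=> [sql univl] [sqr univr]; split.
  by rewrite comp_assoc sqr -comp_assoc sql comp_assoc.
move=> Q x1 x2 sq.
have [w [[w1 w2] wuniq]] := univr Q x1 (g1 \oo x2) ltac:(by rewrite sq comp_assoc).
have [u [[u1 u2] uuniq]] := univl Q w x2 w2.
exists u; split=> [|u' e1 e2]; first by rewrite -comp_assoc u1.
apply: uuniq (e2); apply: wuniq; first by rewrite comp_assoc.
by rewrite comp_assoc sql -comp_assoc e2.
Qed.

Lemma pullback_cancel {A B C D E F : V} {p1 : hom A B} {q1 : hom B C} {p2 : hom A D}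
    {r : hom B E} {f : hom C F} {g1 : hom D E} {g2 : hom E F} :
  r \oo p1 = g1 \oo p2 -> f \oo q1 = g2 \oo r -> jointly_mono q1 r ->
  is_pullback (q1 \oo p1) p2 f (g2 \oo g1) -> is_pullback p1 p2 r g1.
Proof.
move=> sql sqr jm [_ univ]; split=> // Q x1 x2 sq.
have [u [[u1 u2] uuniq]] := univ Q (q1 \oo x1) x2
  ltac:(by rewrite !comp_assoc sqr -!comp_assoc sq).
exists u; split=> [|u' e1 e2]; last by apply: uuniq e2; rewrite -comp_assoc e1.
split=> //; apply: jm; first by rewrite comp_assoc u1.
by rewrite comp_assoc sql -comp_assoc u2.
Qed.

Lemma wide_pullback_jointly_mono {I : Type} {X : I -> V} {P Z : V}
    (p : forall i, hom P (X i)) (d : hom P Z) (f : forall i, hom (X i) Z) :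
  is_wide_pullback p d f ->
  forall Q (u v : hom Q P), (forall i, p i \oo u = p i \oo v) -> d \oo u = d \oo v -> u = v.
Proof.
move=> [cone univ] Q u v ep ed.
have [w [_ wuniq]] := univ Q (fun i => p i \oo u) (d \oo u)
  ltac:(by move=> i; rewrite comp_assoc cone).
by rewrite (wuniq u) // (wuniq v).
Qed.

Lemma wide_pullback_mono {I : Type} {X : I -> V} {P Z : V}
    (p : forall i, hom P (X i)) (d : hom P Z) (f : forall i, hom (X i) Z) :
  is_wide_pullback p d f -> (forall i, is_mono (f i)) -> is_mono d.
Proof.
move=> wpb monof Q u v ed; apply: (wide_pullback_jointly_mono wpb _ _ _ _ ed) => i.
by apply: monof; rewrite !comp_assoc (proj1 wpb) ed.
Qed.

Lemma wide_pullback_cartesian {I : Type} {X X' : I -> V} {P P' Z Z' : V}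
    {p : forall i, hom P (X i)} {d : hom P Z} {f : forall i, hom (X i) Z}
    {p' : forall i, hom P' (X' i)} {d' : hom P' Z'} {f' : forall i, hom (X' i) Z'}
    {alpha : forall i, hom (X i) (X' i)} {zeta : hom Z Z'} {pi : hom P P'} :
  is_wide_pullback p d f -> is_wide_pullback p' d' f' ->
  (forall i, is_pullback (f i) (alpha i) zeta (f' i)) ->
  (forall i, p' i \oo pi = alpha i \oo p i) -> zeta \oo d = d' \oo pi ->
  is_pullback d pi zeta d'.
Proof.
move=> wpb wpb' cart nat_pi sq; split=> // Q q1 q2 sqq.
have [w wP] : exists w : forall i, hom Q (X i),
    forall i, f i \oo w i = q1 /\ alpha i \oo w i = p' i \oo q2.
  apply: (non_dep_dep_functional_choice functional_choice _
    (fun i (w : hom Q (X i)) => f i \oo w = q1 /\ alpha i \oo w = p' i \oo q2)) => i.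
  have [w [? _]] := proj2 (cart i) Q q1 (p' i \oo q2)
    ltac:(by rewrite sqq -(proj1 wpb' i) comp_assoc).
  by exists w.
have [u [[pu du] _]] := proj2 wpb Q w q1 (fun i => proj1 (wP i)).
exists u; split=> [|u' du' piu'].
  split=> //; apply: (wide_pullback_jointly_mono wpb') => [i|].
    by rewrite comp_assoc nat_pi -comp_assoc pu (proj2 (wP i)).
  by rewrite comp_assoc -sq -comp_assoc du sqq.
apply: (wide_pullback_jointly_mono wpb) => [i|]; last by rewrite du du'.
rewrite pu; apply: (pullback_jointly_mono (cart i)).
  by rewrite comp_assoc (proj1 wpb) du' (proj1 (wP i)).
by rewrite comp_assoc -nat_pi -comp_assoc piu' (proj2 (wP i)).
Qed.

End Pullbacks.

Section Exponentials.
Context {V : CSMCat}.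

Definition is_exponential (X : V) {E A : V} (theta : hom (tens E X) A) : Prop :=
  forall Q (t : hom (tens Q X) A), exists! u : hom Q E, theta \oo tensm u idm = t.

Lemma exponential_inj {X E A : V} (theta : hom (tens E X) A) :
  is_exponential X theta ->
  forall Q (u v : hom Q E), theta \oo tensm u idm = theta \oo tensm v idm -> u = v.
Proof.
move=> expo Q u v uv; have [w [_ wuniq]] := expo Q (theta \oo tensm u idm).
by rewrite -(wuniq u) // (wuniq v).
Qed.

Lemma iso_curry_exponential {X E A : V} (theta : hom (tens E X) A) :
  is_iso (curry theta) -> is_exponential X theta.
Proof.
have ev_curry_comp Q (u : hom Q E) :
    ev X A \oo tensm (curry theta \oo u) idm = theta \oo tensm u idm.
  by rewrite tensm_compl comp_assoc ev_curry.
move=> [g [gK Kg]] Q t; exists (g \oo curry t); split.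
  by rewrite -ev_curry_comp comp_assoc Kg comp_idl ev_curry.
move=> u <-; rewrite -(curry_uniq _ _ _ _ _ (ev_curry_comp Q u)).
by rewrite comp_assoc gK comp_idl.
Qed.

Lemma exponential_mono {X E1 E2 A1 A2 : V}
    {theta1 : hom (tens E1 X) A1} {theta2 : hom (tens E2 X) A2}
    {g : hom A1 A2} {g' : hom E1 E2} :
  is_exponential X theta1 -> g \oo theta1 = theta2 \oo tensm g' idm ->
  is_mono g -> is_mono g'.
Proof.
move=> expo1 nat_g monog Q u v guv; apply: (exponential_inj expo1); apply: monog.
by rewrite !comp_assoc nat_g -!comp_assoc -!tensm_compl guv.
Qed.

Lemma comp_tensm_nat {X S T S' T' Q : V} {k : hom S T} {k' : hom S' T'}
    {thS : hom (tens S' X) S} {thT : hom (tens T' X) T} (u : hom Q S') :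
  k \oo thS = thT \oo tensm k' idm ->
  k \oo thS \oo tensm u idm = thT \oo tensm (k' \oo u) idm.
Proof. by move=> nat_k; rewrite nat_k -comp_assoc -tensm_compl. Qed.

Lemma exponential_pullback {X P Y1 Y2 Z P' Y1' Y2' Z' : V}
    {p1 : hom P Y1} {p2 : hom P Y2} {f : hom Y1 Z} {g : hom Y2 Z}
    {p1' : hom P' Y1'} {p2' : hom P' Y2'} {f' : hom Y1' Z'} {g' : hom Y2' Z'}
    {thP : hom (tens P' X) P} {th1 : hom (tens Y1' X) Y1}
    {th2 : hom (tens Y2' X) Y2} {thZ : hom (tens Z' X) Z} :
  is_exponential X thP -> is_exponential X th1 ->
  is_exponential X th2 -> is_exponential X thZ ->
  p1 \oo thP = th1 \oo tensm p1' idm -> p2 \oo thP = th2 \oo tensm p2' idm ->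
  f \oo th1 = thZ \oo tensm f' idm -> g \oo th2 = thZ \oo tensm g' idm ->
  is_pullback p1 p2 f g -> is_pullback p1' p2' f' g'.
Proof.
move=> expoP expo1 expo2 expoZ nat_p1 nat_p2 nat_f nat_g [sq univ].
split.
  apply: (exponential_inj expoZ); rewrite !tensm_compl !comp_assoc.
  by rewrite -nat_f -nat_g -!comp_assoc -nat_p1 -nat_p2 !comp_assoc sq.
move=> Q q1 q2 sqq.
have [w [[w1 w2] wuniq]] := univ (tens Q X) (th1 \oo tensm q1 idm) (th2 \oo tensm q2 idm)
  ltac:(by rewrite !comp_assoc !(comp_tensm_nat _ nat_f) (comp_tensm_nat _ nat_g) sqq).
have [u [thPu _]] := expoP Q w.
exists u; split.
  split; [apply: (exponential_inj expo1) | apply: (exponential_inj expo2)].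
    by rewrite -(comp_tensm_nat _ nat_p1) -comp_assoc thPu w1.
  by rewrite -(comp_tensm_nat _ nat_p2) -comp_assoc thPu w2.
move=> u' pu1 pu2; apply: (exponential_inj expoP); rewrite thPu.
apply: wuniq.
  by rewrite comp_assoc (comp_tensm_nat _ nat_p1) pu1.
by rewrite comp_assoc (comp_tensm_nat _ nat_p2) pu2.
Qed.

End Exponentials.

Section Cotensors.
Context {V : CSMCat} (B : VCat V).

Definition cotensor_eval (X : V) {b c : B} (mu : hom X (vhom B c b)) (a : B) :
    hom (tens (vhom B a c) X) (vhom B a b) :=
  vcomp B a c b \oo tensm mu idm \oo sym (vhom B a c) X.

Lemma cotensor_exponential (X : V) (b c : B) (mu : hom X (vhom B c b)) (a : B) :
  is_cotensor B X b c mu -> is_exponential X (cotensor_eval X mu a).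
Proof. by move=> cot; apply: iso_curry_exponential; apply: cot. Qed.

Lemma homR_cotensor_eval (X : V) (b c : B) (mu : hom X (vhom B c b))
    (a1 a2 : B) (e : umor B a1 a2) :
  homR B e b \oo cotensor_eval X mu a2
  = cotensor_eval X mu a1 \oo tensm (homR B e c) idm.
Proof.
rewrite /cotensor_eval; reassoc.
arw (homR_vcomp B _ _ _ _ _); arw (eq_sym (tensm_interchange _ _)).
by arw (eq_sym (sym_nat _ _ _ _ _ _ _)).
Qed.

Lemma homL_cotensor_eval (X : V) {b1 b2 c1 c2 : B} {m : umor B b1 b2}
    {h : umor B c1 c2} {mu1 : hom X (vhom B c1 b1)} {mu2 : hom X (vhom B c2 b2)} :
  homL B c1 m \oo mu1 = homR B h b2 \oo mu2 -> forall a : B,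
  homL B a m \oo cotensor_eval X mu1 a = cotensor_eval X mu2 a \oo tensm (homL B a h) idm.
Proof.
move=> mu12 a; rewrite /cotensor_eval; reassoc.
arw (homL_vcomp B _ _ _ _ _); arw (eq_sym (tensm_compl _ _)); rewrite mu12 tensm_compl; reassoc.
arw (eq_sym (vcomp_extranat B _ _ _ _ _)); arw (eq_sym (tensm_interchange _ _)).
by arw (eq_sym (sym_nat _ _ _ _ _ _ _)).
Qed.

End Cotensors.

Section StrongMonos.
Context {V : CSMCat} (B : VCat V).

Lemma Vmono_comp (a b c : B) (f : umor B a b) (g : umor B b c) :
  Vmono B f -> Vmono B g -> Vmono B (ucomp B g f).
Proof. by move=> monof monog x; rewrite homL_ucomp; apply: mono_comp. Qed.

Lemma Vmono_compK (a b c : B) (f : umor B a b) (g : umor B b c) :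
  Vmono B (ucomp B g f) -> Vmono B f.
Proof.
by move=> monogf x; apply: (mono_compK (homL B x f) (homL B x g)); rewrite -homL_ucomp.
Qed.

Lemma Vorth_comp (a1 a2 a b c : B) (e : umor B a1 a2) (f : umor B a b) (g : umor B b c) :
  Vorth B e f -> Vorth B e g -> Vorth B e (ucomp B g f).
Proof. by rewrite /Vorth !homL_ucomp; apply: pullback_paste. Qed.

Lemma Vorth_compK (a1 a2 a b c : B) (e : umor B a1 a2) (f : umor B a b) (g : umor B b c) :
  Vepi B e -> Vorth B e (ucomp B g f) -> Vorth B e f.
Proof.
rewrite /Vorth !homL_ucomp => epi.
by apply: pullback_cancel; [apply: homR_homL | apply: homR_homL | apply/jointly_monoWr/epi].
Qed.

Lemma Vmono_pullback (b1 b2 c P : B) (m : umor B b1 b2) (f : umor B c b2)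
    (f' : umor B P b1) (m' : umor B P c) :
  is_Vpullback B m f f' m' -> Vmono B m -> Vmono B m'.
Proof. by move=> [_ pb] monom a; apply: pullback_mono (pb a) (monom a). Qed.

(* Paste the pullbacks of [f] along [m] at [a2] and [a1] with the orthogonality
   squares of [m] and [m'] respectively: both composites are the same
   rectangle, so the two-pullback lemma applies. *)
Lemma Vorth_pullback (a1 a2 b1 b2 c P : B) (e : umor B a1 a2) (m : umor B b1 b2)
    (f : umor B c b2) (f' : umor B P b1) (m' : umor B P c) :
  is_Vpullback B m f f' m' -> Vorth B e m -> Vorth B e m'.
Proof.
move=> [_ pb] orthm; apply: pullback_transpose.
apply: (pullback_cancel _ (proj1 (pb a1)) (pullback_jointly_mono (pb a1))).
  by rewrite homR_homL.
rewrite -!homR_homL; apply: pullback_paste (pb a2) _.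
exact: pullback_transpose.
Qed.

Lemma Vmono_fibre_product (I : Type) (Bi : I -> B) (b P : B)
    (m : forall i, umor B (Bi i) b) (p : forall i, umor B P (Bi i)) (d : umor B P b) :
  is_Vfibre_product B m p d -> (forall i, Vmono B (m i)) -> Vmono B d.
Proof. by move=> [_ wpb] monom a; apply: (wide_pullback_mono (wpb a)) => i; apply: monom. Qed.

Lemma Vorth_fibre_product (I : Type) (Bi : I -> B) (b P a1 a2 : B) (e : umor B a1 a2)
    (m : forall i, umor B (Bi i) b) (p : forall i, umor B P (Bi i)) (d : umor B P b) :
  is_Vfibre_product B m p d -> (forall i, Vorth B e (m i)) -> Vorth B e d.
Proof.
move=> [_ wpb] orthm; apply: (wide_pullback_cartesian (wpb a2) (wpb a1) orthm).
  by move=> i; rewrite homR_homL.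
exact: homR_homL.
Qed.

Lemma Vmono_cotensor (X : V) {b1 b2 c1 c2 : B} {m : umor B b1 b2} {h : umor B c1 c2}
    {mu1 : hom X (vhom B c1 b1)} {mu2 : hom X (vhom B c2 b2)} :
  is_cotensor B X b1 c1 mu1 -> homL B c1 m \oo mu1 = homR B h b2 \oo mu2 ->
  Vmono B m -> Vmono B h.
Proof.
move=> cot1 mu12 monom a.
apply: (exponential_mono (cotensor_exponential a cot1)) (monom a).
exact: (homL_cotensor_eval _ _ mu12).
Qed.

Lemma Vorth_cotensor (X : V) {b1 b2 c1 c2 a1 a2 : B} {e : umor B a1 a2}
    {m : umor B b1 b2} {h : umor B c1 c2}
    {mu1 : hom X (vhom B c1 b1)} {mu2 : hom X (vhom B c2 b2)} :
  is_cotensor B X b1 c1 mu1 -> is_cotensor B X b2 c2 mu2 ->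
  homL B c1 m \oo mu1 = homR B h b2 \oo mu2 ->
  Vorth B e m -> Vorth B e h.
Proof.
move=> cot1 cot2 mu12.
apply: (exponential_pullback (cotensor_exponential a2 cot1) (cotensor_exponential a2 cot2)
          (cotensor_exponential a1 cot1) (cotensor_exponential a1 cot2));
  by [apply: (homL_cotensor_eval _ _ mu12) | apply: homR_cotensor_eval].
Qed.

Lemma StrMonoV_compK (a b c : B) (f : umor B a b) (g : umor B b c) :
  StrMonoV B (ucomp B g f) -> StrMonoV B f.
Proof.
move=> [mono orth]; split=> [|a1 a2 e epi]; first exact: Vmono_compK mono.
exact: Vorth_compK epi (orth _ _ _ epi).
Qed.

Lemma StrMonoV_comp (a b c : B) (f : umor B a b) (g : umor B b c) :
  StrMonoV B f -> StrMonoV B g -> StrMonoV B (ucomp B g f).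
Proof.
move=> [monof orthf] [monog orthg]; split=> [|a1 a2 e epi]; first exact: Vmono_comp.
exact: Vorth_comp (orthf _ _ _ epi) (orthg _ _ _ epi).
Qed.

Lemma StrMonoV_cotensor (X : V) (b1 b2 : B) (m : umor B b1 b2)
    (c1 c2 : B) (mu1 : hom X (vhom B c1 b1)) (mu2 : hom X (vhom B c2 b2))
    (h : umor B c1 c2) :
  is_cotensor B X b1 c1 mu1 -> is_cotensor B X b2 c2 mu2 ->
  homL B c1 m \oo mu1 = homR B h b2 \oo mu2 ->
  StrMonoV B m -> StrMonoV B h.
Proof.
move=> cot1 cot2 mu12 [mono orth]; split=> [|a1 a2 e epi].
  exact: Vmono_cotensor cot1 mu12 mono.
exact: Vorth_cotensor cot1 cot2 mu12 (orth _ _ _ epi).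
Qed.

Lemma StrMonoV_fibre_product (I : Type) (Bi : I -> B) (b P : B)
    (m : forall i, umor B (Bi i) b) (p : forall i, umor B P (Bi i)) (d : umor B P b) :
  is_Vfibre_product B m p d -> (forall i, StrMonoV B (m i)) -> StrMonoV B d.
Proof.
move=> fp strm; split=> [|a1 a2 e epi].
  by apply: (Vmono_fibre_product fp) => i; case: (strm i).
by apply: (Vorth_fibre_product fp) => i; apply: (proj2 (strm i)).
Qed.

Lemma StrMonoV_pullback (b1 b2 c P : B) (m : umor B b1 b2) (f : umor B c b2)
    (f' : umor B P b1) (m' : umor B P c) :
  is_Vpullback B m f f' m' -> StrMonoV B m -> StrMonoV B m'.
Proof.
move=> pb [mono orth]; split=> [|a1 a2 e epi]; first exact: Vmono_pullback pb mono.
exact: Vorth_pullback pb (orth _ _ _ epi).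
Qed.

End StrongMonos.

Theorem proposition6p2 (V : CSMCat) (B : VCat V) :
  (forall (a b c : B) (f : umor B a b) (g : umor B b c),
      StrMonoV B (ucomp B g f) -> StrMonoV B f) /\
  (forall (a b c : B) (f : umor B a b) (g : umor B b c),
      StrMonoV B f -> StrMonoV B g -> StrMonoV B (ucomp B g f)) /\
  (* h = [X, m] is the map induced between the cotensors *)
  (forall (X : V) (b1 b2 : B) (m : umor B b1 b2)
      (c1 c2 : B) (mu1 : hom X (vhom B c1 b1)) (mu2 : hom X (vhom B c2 b2))
      (h : umor B c1 c2),
      is_cotensor B X b1 c1 mu1 -> is_cotensor B X b2 c2 mu2 ->
      homL B c1 m \oo mu1 = homR B h b2 \oo mu2 ->
      StrMonoV B m -> StrMonoV B h) /\
  (forall (I : Type) (Bi : I -> B) (b P : B)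
      (m : forall i, umor B (Bi i) b) (p : forall i, umor B P (Bi i)) (d : umor B P b),
      is_Vfibre_product B m p d ->
      (forall i, StrMonoV B (m i)) -> StrMonoV B d) /\
  (forall (b1 b2 c P : B) (m : umor B b1 b2) (f : umor B c b2)
      (f' : umor B P b1) (m' : umor B P c),
      is_Vpullback B m f f' m' -> StrMonoV B m -> StrMonoV B m').
Proof.
split; first exact: (@StrMonoV_compK V B).
split; first exact: (@StrMonoV_comp V B).
split; first exact: (@StrMonoV_cotensor V B).
split; first exact: (@StrMonoV_fibre_product V B).
exact: (@StrMonoV_pullback V B).
Qed.
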